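(* Let $A\in\mathbb C^{n\times n}$, $b\in\mathbb C^n$, and let $M, F\in\mathbb C^{n\times n}$ be nonsingular. Partition the index set $\{1,\dots,n\}$ into $m$ consecutive blocks, and write accordingly $x = (x^{(1)},\dots,x^{(m)})$, $b=(b^{(1)},\dots,b^{(m)})$, and $A = (A^{(s,q)})_{s,q=1}^m$ in block form; assume $M$ and $F$ are block diagonal with respect to this partition, with nonsingular diagonal blocks $M^{(1)},\dots,M^{(m)}$ and $F^{(1)},\dots,F^{(m)}$. Consider any sequence of subsets $\Omega_k\subseteq\{1,\dots,m\}$, $k\in\mathbb N$, such that each $s\in\{1,\dots,m\}$ belongs to $\Omega_k$ for infinitely many $k$, and any functions $\delta_s(q,k)\in\mathbb N$ ($s,q\in\{1,\dots,m\}$, $k\in\mathbb N$) with $\delta_s(q,k)\le k$ and $\lim_{k\to\infty}\delta_s(q,k)=\infty$ for all $s,q$. Given an arbitrary initial vector $x^0$, define the asynchronous alternating iteration: for each $k\in\mathbb N$ and all $s\in\{1,\dots,m\}$, \[ y^{(s),k} := x^{(s),\delta_s(s,k)} + {M^{(s)}}^{-1}\Big(b^{(s)} - \sum_{q=1}^m A^{(s,q)} x^{(q),\delta_s(q,k)}\Big), \] \[ x^{(s),k+1} := \begin{cases} y^{(s),\delta_s(s,k)} + {F^{(s)}}^{-1}\Big(b^{(s)} - \displaystyle\sum_{q=1}^m A^{(s,q)} y^{(q),\delta_s(q,k)}\Big) & \text{if } s\in\Omega_k,\\[1ex] x^{(s),k} & \text{if } s\notin\Omega_k.\end{cases} \]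 If $A$ is an $\mathsf H$-matrix and \[ \langle M\rangle - |M - A| = \langle A\rangle, \qquad \langle F\rangle - |F - A| = \langle A\rangle, \] then for every initial guess $x^0$, every such sequence $\{\Omega_k\}$ and every such delay functions $\delta_1,\dots,\delta_m$, the sequence $x^k$ converges to the solution of $Ax=b$.
   Context: For a matrix $\mathcal A$, $|\mathcal A|$ denotes the entrywise absolute value (modulus) and $\rho(\mathcal A)$ its spectral radius. Comparisons between matrices are entrywise. A square real matrix $\mathcal A$ is an $\mathsf M$-matrix if there exists $\alpha\in\mathbb R$ with $\alpha I - \mathcal A \ge 0$ (entrywise) and $\alpha > \rho(\alpha I - \mathcal A)$. The comparison matrix $\langle \mathcal A\rangle$ of a square matrix $\mathcal A$ is defined by $\langle \mathcal A\rangle_{i,i} := |\mathcal A_{i,i}|$ and $\langle \mathcal A\rangle_{i,j} := -|\mathcal A_{i,j}|$ for $i\ne j$. A square matrix $\mathcal A$ is an $\mathsf H$-matrix if its comparison matrix $\langle\mathcal A\rangle$ is an $\mathsf M$-matrix. *)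

From HB Require Import structures.
From mathcomp Require Import all_boot all_order all_algebra complex reals.
Set Implicit Arguments. Unset Strict Implicit. Unset Printing Implicit Defensive.
Import Order.TTheory GRing.Theory Num.Theory.
Local Open Scope ring_scope.

Section MatrixNotions.
Variable C : numClosedFieldType.

Definition mabs (m n : nat) (A : 'M[C]_(m, n)) : 'M[C]_(m, n) := map_mx Num.norm A.

Definition cmp_mx (n : nat) (A : 'M[C]_n) : 'M[C]_n :=
  \matrix_(i, j) (if i == j then `|A i i| else - `|A i j|).

Definition spec_rad (n : nat) (A : 'M[C]_n) : C :=
  \big[Num.max/0]_(z <- sval (closed_field_poly_normal (char_poly A))) `|z|.

Definition mx_nonneg (m n : nat) (A : 'M[C]_(m, n)) : Prop := forall i j, 0 <= A i j.

Definition is_Mmatrix (n : nat) (A : 'M[C]_n) : Prop :=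
  (forall i j, A i j \is Num.real) /\
  exists alpha : C, alpha \is Num.real /\
    mx_nonneg (alpha%:M - A) /\ spec_rad (alpha%:M - A) < alpha.

Definition is_Hmatrix (n : nat) (A : 'M[C]_n) : Prop := is_Mmatrix (cmp_mx A).

End MatrixNotions.

Section Blocks.
(* A partition of {0..n-1} into m blocks is given by blk : 'I_n -> 'I_m
   (i lies in block blk i). *)
Variables (C : numClosedFieldType) (n m : nat) (blk : 'I_n -> 'I_m).

Definition consecutive_blocks : Prop :=
  (forall i j : 'I_n, (i <= j)%N -> (blk i <= blk j)%N) /\
  (forall s : 'I_m, exists i, blk i = s).

Definition blkset (s : 'I_m) : {set 'I_n} := [set i | blk i == s].

(* the a-th index (in increasing order) of block s *)
Definition bidx (s : 'I_m) (a : 'I_#|blkset s|) : 'I_n := enum_val a.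

Definition subblock (A : 'M[C]_n) (s q : 'I_m) : 'M[C]_(#|blkset s|, #|blkset q|) :=
  \matrix_(a, c) A (bidx a) (bidx c).

Definition bvec (x : 'cV[C]_n) (s : 'I_m) : 'cV[C]_(#|blkset s|) :=
  \col_a x (bidx a) 0.

Definition block_diagonal (M : 'M[C]_n) : Prop :=
  forall i j, blk i != blk j -> M i j = 0.

End Blocks.

(* Since A is an H-matrix, the real Z-matrix G = <A> satisfies
   |det (t I + G)| >= (alpha - rho)^n for every t >= 0, because the eigenvalues of
   alpha I - G lie in the disc of radius rho < alpha.  Following t I + G from large t,
   where it is diagonally dominant, down to t = 0 keeps it inverse-positive, hence
   G u = 1 for some u > 0; this weight already shows that A is nonsingular.  In the
   weighted max-norm max_j |v_j| / u_j, the splitting conditions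
   <M> - |M - A| = <A> = <F> - |F - A| make every block update, of y from x and of x
   from y, a contraction by a common factor gam < 1.  Since every block is updated
   infinitely often and all delays tend to infinity, once all blocks of all iterates lie
   in the box of radius gam^p E0 they eventually lie in the box of radius
   gam^(p+1) E0. *)

From HB Require Import structures.
From mathcomp Require Import all_boot all_order all_algebra complex reals.
From mathcomp Require Import fingroup perm lra.
Import Order.TTheory GRing.Theory Num.Theory Normc.
Set Implicit Arguments. Unset Strict Implicit. Unset Printing Implicit Defensive.
Local Open Scope ring_scope.
Local Open Scope complex_scope.

Lemma ler_sum_term (R : numDomainType) (I : finType) (F : I -> R) i :
  (forall j, 0 <= F j) -> F i <= \sum_j F j.
Proof. by move=> F_ge0; rewrite (bigD1 i) //= lerDl sumr_ge0. Qed.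

Lemma normr_det_le (R : numDomainType) n (X : 'M[R]_n) c :
  (forall i j, `|X i j| <= c) -> `|\det X| <= n`!%:R * c ^+ n.
Proof.
move=> Xc; have -> : n`!%:R * c ^+ n = \sum_(s : 'S_n) c ^+ n.
  by rewrite sumr_const card_Sn mulr_natl.
apply: le_trans (ler_norm_sum _ _ _) (ler_sum _ _) => s _.
rewrite normrM normr_sign mul1r normr_prod -[in X in _ <= X](card_ord n).
by rewrite -prodr_const; apply: ler_prod => i _; rewrite normr_ge0 Xc.
Qed.

Section MonotoneMatrices.
Variable R : realFieldType.

Definition monotone_mx n (X : 'M[R]_n) :=
  forall v : 'cV[R]_n, (forall i, 0 <= (X *m v) i 0) -> forall i, 0 <= v i 0.

Lemma Zmx_rowsum_gt0_monotone n (Z : 'M[R]_n) :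
  (forall i j, i != j -> Z i j <= 0) -> (forall i, 0 < \sum_j Z i j) -> monotone_mx Z.
Proof.
move=> Zoff Zrow v Zv i; rewrite leNgt; apply/negP => vi_lt0.
case: (@arg_minP _ _ _ i predT (fun j => v j 0) isT) => i0 _ min_i0.
have vi0_lt0 : v i0 0 < 0 by apply: le_lt_trans (min_i0 i isT) vi_lt0.
have : (Z *m v) i0 0 <= (\sum_j Z i0 j) * v i0 0.
  rewrite mxE mulr_suml; apply: ler_sum => j _.
  have [->|ji0] := eqVneq j i0; first by [].
  by rewrite ler_wnM2l ?min_i0 // Zoff // eq_sym.
by move=> le_row; have := Zv i0; rewrite leNgt (le_lt_trans le_row) // pmulr_rlt0.
Qed.

Lemma monotone_invmx_ge0 n (X : 'M[R]_n) :
  X \in unitmx -> monotone_mx X -> forall i j, 0 <= invmx X i j.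
Proof.
move=> Xu Xmono i j.
have -> : invmx X i j = (invmx X *m (delta_mx j 0 : 'cV_n)) i 0.
  by rewrite -colE mxE.
apply: Xmono => k; rewrite mulmxA mulmxV // mul1mx mxE.
by case: (_ && _).
Qed.

Lemma monotone_dominant_scalar_add n (Z : 'M[R]_n) t :
  (forall i j, i != j -> Z i j <= 0) -> (forall i, \sum_j `|Z i j| < t) ->
  monotone_mx (t%:M + Z).
Proof.
move=> Zoff Zt; apply: Zmx_rowsum_gt0_monotone => [i j ij|i].
  by rewrite !mxE (negbTE ij) add0r Zoff.
have -> : \sum_j (t%:M + Z) i j = t + \sum_j Z i j.
  under eq_bigr do rewrite !mxE.
  rewrite big_split /= (bigD1 i) //= eqxx mulr1n big1 ?addr0 // => j ji.
  by rewrite eq_sym (negbTE ji) /= mulr0n.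
apply: lt_le_trans (_ : 0 < t - \sum_j `|Z i j|) _; first by rewrite subr_gt0.
rewrite lerD2l -sumrN; apply: ler_sum => j _.
by rewrite lerNl -normrN ler_norm.
Qed.

Lemma monotone_subr_scalar n (Y : 'M[R]_n) (h K : R) :
  Y \in unitmx -> monotone_mx Y -> (forall i j, invmx Y i j <= K) ->
  0 < h -> h * (K *+ n) < 1 -> monotone_mx (Y - h%:M).
Proof.
move=> Yu Ymono YK h_gt0 hK v Yv.
have N_ge0 := monotone_invmx_ge0 Yu Ymono.
have resolvent : (1%:M - h *: invmx Y) *m v = invmx Y *m ((Y - h%:M) *m v).
  by rewrite mulmxBl mul1mx mulmxA mulmxBr mulVmx // mul_mx_scalar mulmxBl mul1mx.
have : monotone_mx (1%:M - h *: invmx Y).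
  apply: Zmx_rowsum_gt0_monotone => [i j ij|i].
    by rewrite !mxE (negbTE ij) /= sub0r oppr_le0 mulr_ge0 ?N_ge0 // ltW.
  have -> : \sum_j (1%:M - h *: invmx Y) i j = 1 - h * \sum_j invmx Y i j.
    under eq_bigr do rewrite !mxE.
    rewrite sumrB mulr_sumr (bigD1 i) //= eqxx mulr1n big1 ?addr0 // => j ji.
    by rewrite eq_sym (negbTE ji) /= mulr0n.
  rewrite subr_gt0; apply: le_lt_trans hK; apply: ler_wpM2l; first exact: ltW.
  by rewrite -[in X in _ <= X](card_ord n) -sumr_const; apply: ler_sum.
apply=> i; rewrite resolvent mxE sumr_ge0 // => j _.
by rewrite mulr_ge0 ?N_ge0.
Qed.

Lemma invmx_entry_le n (Y : 'M[R]_n) (c d : R) :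
  0 < c -> c <= `|\det Y| -> (forall i j, `|Y i j| <= d) ->
  forall i j, invmx Y i j <= n.-1`!%:R * d ^+ n.-1 / c.
Proof.
move=> c_gt0 c_det Yd i j.
have Yu : Y \in unitmx by rewrite unitmxE unitfE -normr_gt0 (lt_le_trans c_gt0).
rewrite /invmx Yu mxE; apply: le_trans (ler_norm _) _.
rewrite normrM normfV mulrC mxE /cofactor normrM normr_sign mul1r.
apply: ler_pM; rewrite ?invr_ge0 ?normr_ge0 //.
  by apply: normr_det_le => a b; rewrite !mxE.
by rewrite lef_pV2 ?posrE // (lt_le_trans c_gt0).
Qed.

Lemma monotone_scalar_step n (Y : 'M[R]_n) (c d h : R) :
  0 < c -> c <= `|\det Y| -> (forall i j, `|Y i j| <= d) ->
  0 < h -> h * ((n.-1`!%:R * d ^+ n.-1 / c) *+ n) < 1 ->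
  monotone_mx Y -> monotone_mx (Y - h%:M).
Proof.
move=> c_gt0 c_det Yd h_gt0 hK Ymono.
have Yu : Y \in unitmx by rewrite unitmxE unitfE -normr_gt0 (lt_le_trans c_gt0).
exact: monotone_subr_scalar Yu Ymono (invmx_entry_le c_gt0 c_det Yd) h_gt0 hK.
Qed.

Lemma monotone_Zmx_pos_solution n (G : 'M[R]_n) :
  G \in unitmx -> monotone_mx G -> (forall i j, i != j -> G i j <= 0) ->
  exists2 u : 'cV[R]_n, forall i, 0 < u i 0 & G *m u = const_mx 1.
Proof.
move=> Gu Gmono Goff; pose u := invmx G *m (const_mx 1 : 'cV[R]_n).
have Gu1 : G *m u = const_mx 1 by rewrite mulmxA mulmxV // mul1mx.
have u_ge0 : forall i, 0 <= u i 0 by apply: Gmono => i; rewrite Gu1 mxE.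
exists u => // i; rewrite lt_def u_ge0 andbT; apply/eqP => ui0.
have : (G *m u) i 0 <= 0.
  rewrite mxE (bigD1 i) //= ui0 mulr0 add0r sumr_le0 // => j ji.
  by rewrite mulr_le0_ge0 ?u_ge0 // Goff // eq_sym.
by rewrite Gu1 mxE leNgt ltr01.
Qed.

End MonotoneMatrices.

Section ZmxHomotopy.
Variable R : archiRealFieldType.

Lemma archi_descent (P : R -> Prop) (T h : R) :
  0 < h -> (forall t, T <= t -> P t) ->
  (forall t, 0 <= t -> t <= T -> P (t + h) -> P t) -> P 0.
Proof.
move=> h_gt0 P_large P_step.
have P_k k t : 0 <= t -> T - k%:R * h <= t -> P t.
  elim: k t => [|k IHk] t t_ge0 Tt; first by apply: P_large; rewrite mul0r subr0 in Tt.
  have [Tkt|tTk] := lerP (T - k%:R * h) t; first exact: IHk.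
  have kh_ge0 : 0 <= k%:R * h := mulr_ge0 (ler0n _ _) (ltW h_gt0).
  apply: P_step => //; first by move: tTk; lra.
  apply: IHk; first exact: addr_ge0 t_ge0 (ltW h_gt0).
  by move: Tt; rewrite -natr1 mulrDl mul1r; lra.
have [T_le0|T_gt0] := lerP T 0; first exact: P_large.
apply: (P_k (Num.bound (T / h))) => //; rewrite subr_le0 -ler_pdivrMr //.
by apply/ltW/archi_boundP/divr_ge0; apply: ltW.
Qed.

Lemma Zmx_det_bounded_monotone n (G : 'M[R]_n) (c : R) :
  0 < c -> (forall i j, i != j -> G i j <= 0) ->
  (forall t, 0 <= t -> c <= `|\det (t%:M + G)|) -> monotone_mx G.
Proof.
move=> c_gt0 Goff Gdet.
pose S := \sum_i \sum_j `|G i j|.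
have rowS i : \sum_j `|G i j| <= S.
  by apply: (ler_sum_term (F := fun i => \sum_j `|G i j|)) => k; rewrite sumr_ge0.
have GS i j : `|G i j| <= S by apply: le_trans (rowS i); exact: ler_sum_term.
have S_ge0 : 0 <= S by rewrite sumr_ge0 // => i _; rewrite sumr_ge0.
pose T := S + 1; pose d := T + 1 + S.
have d_ge0 : 0 <= d by rewrite /d /T; lra.
pose K := n.-1`!%:R * d ^+ n.-1 / c.
have K_ge0 : 0 <= K.
  by apply: divr_ge0; [apply: mulr_ge0; [exact: ler0n|exact: exprn_ge0]|exact: ltW].
pose h := (K *+ n + 1)^-1.
have Kn1_gt0 : 0 < K *+ n + 1 by rewrite ltr_wpDl ?mulrn_wge0.
have h_gt0 : 0 < h by rewrite invr_gt0.
have h_le1 : h <= 1 by rewrite invf_le1 // lerDr mulrn_wge0.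
have hK : h * (K *+ n) < 1 by rewrite mulrC ltr_pdivrMr // mul1r ltrDl.
(* Lower the shift t from T, where t I + G is diagonally dominant, to 0 in steps of h;
   the determinant bound c caps the entries of the inverses by K, which is what lets
   each step preserve monotonicity. *)
suff : monotone_mx (0%:M + G) by rewrite raddf0 add0r.
apply: (@archi_descent (fun t => monotone_mx (t%:M + G)) T h h_gt0) => [t Tt|t t_ge0 tT].
  apply: monotone_dominant_scalar_add => // i.
  by apply: le_lt_trans (rowS i) (lt_le_trans _ Tt); rewrite ltrDl.
have th_ge0 : 0 <= t + h := addr_ge0 t_ge0 (ltW h_gt0).
have Yd i j : `|((t + h)%:M + G) i j| <= d.
  rewrite !mxE; apply: le_trans (ler_normD _ _) (lerD _ (GS i j)).
  case: (i == j); rewrite /= ?mulr1n ?mulr0n ?normr0 ?(ger0_norm th_ge0).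
    by move: tT; rewrite /T; lra.
  by rewrite /T; lra.
move/(monotone_scalar_step c_gt0 (Gdet _ th_ge0) Yd h_gt0 hK).
by rewrite raddfD /= addrAC addrK.
Qed.

End ZmxHomotopy.

Section SpectralRadius.
Variable C : numClosedFieldType.

Lemma horner_char_poly n (B : 'M[C]_n) s : (char_poly B).[s] = \det (s%:M - B).
Proof.
rewrite /char_poly -[_.[s]]/(horner_eval s _) -det_map_mx; congr (\det _).
apply/matrixP => i j; rewrite !mxE /horner_eval /=.
by rewrite /horner_eval hornerD hornerN hornerMn hornerX hornerC.
Qed.

Lemma spec_radP n (B : 'M[C]_n) :
  0 <= spec_rad B /\
  forall z, z \in sval (closed_field_poly_normal (char_poly B)) -> `|z| <= spec_rad B.
Proof.
rewrite /spec_rad; elim: (sval _) => [|z rs [IH_ge0 IH]]; first by rewrite big_nil.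
have IH_real : \big[Num.max/0]_(y <- rs) `|y| \is Num.real := ger0_real IH_ge0.
rewrite big_cons /Order.max; case: ifP => [lt_z|/negbT ge_z].
  split=> [|y]; first exact: IH_ge0.
  by rewrite in_cons => /predU1P [->|/IH//]; apply: ltW.
have le_z : \big[Num.max/0]_(y <- rs) `|y| <= `|z| by rewrite real_leNgt.
split=> [|y]; first exact: normr_ge0.
by rewrite in_cons => /predU1P [->//|/IH/le_trans]; apply.
Qed.

Lemma normr_det_sub_ge n (B : 'M[C]_n) s :
  spec_rad B <= s -> (s - spec_rad B) ^+ n <= `|\det (s%:M - B)|.
Proof.
move=> rho_s; have [rho_ge0 rho_roots] := spec_radP B.
have s_ge0 : 0 <= s := le_trans rho_ge0 rho_s.
rewrite -horner_char_poly.
have [] := svalP (closed_field_poly_normal (char_poly B)); set rs := sval _.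
move=> cpE; rewrite cpE (monicP (char_poly_monic B)) scale1r horner_prod normr_prod.
have rs_size : size rs = n.
  have := size_char_poly B.
  by rewrite cpE (monicP (char_poly_monic B)) scale1r size_prod_XsubC => -[].
rewrite -[in X in _ ^+ X]rs_size.
have -> : (s - spec_rad B) ^+ size rs = \prod_(z <- rs) (s - spec_rad B).
  by rewrite big_const_seq count_predT iter_mulr_1.
rewrite !big_seq; apply: ler_prod => z z_root; rewrite subr_ge0 rho_s hornerXsubC /=.
apply: le_trans (lerB_dist _ _); rewrite (ger0_norm s_ge0) lerD2l lerN2.
exact: rho_roots z z_root.
Qed.

End SpectralRadius.

Section ComplexNorm.
Variable R : rcfType.

Lemma normr_normc (z : R[i]) : `|z| = (normc z)%:C.
Proof. by case: z. Qed.

Lemma normr_real_complex (r : R) : `|r%:C| = `|r|%:C.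
Proof. by rewrite normr_normc /normc /= expr0n addr0 sqrtr_sqr. Qed.

Lemma normc_ge0 (z : R[i]) : 0 <= normc z.
Proof. by rewrite -ler0c -normr_normc. Qed.

Lemma normc_sum (I : finType) (P : pred I) (F : I -> R[i]) :
  normc (\sum_(i | P i) F i) <= \sum_(i | P i) normc (F i).
Proof.
rewrite -lecR -normr_normc rmorph_sum; apply: le_trans (ler_norm_sum _ _ _) _.
by apply: ler_sum => i _; rewrite normr_normc.
Qed.

Lemma normcB (x y : R[i]) : normc (x - y) <= normc x + normc y.
Proof. by rewrite -lecR rmorphD -!normr_normc ler_normB. Qed.

End ComplexNorm.

Section HMatrixWeight.
Variable R : realType.

Lemma Hmatrix_weight n (A : 'M[R[i]]_n) : is_Hmatrix A ->
  exists2 u : 'I_n -> R, (forall i, 0 < u i) &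
    forall i, normc (A i i) * u i - \sum_(j | j != i) normc (A i j) * u j = 1.
Proof.
case=> _ [al [al_real [_]]]; set B := al%:M - cmp_mx A => rho_lt_al.
have [rho_ge0 _] := spec_radP B.
pose G : 'M[R]_n := \matrix_(i, j) if i == j then normc (A i i) else - normc (A i j).
have Goff i j : i != j -> G i j <= 0.
  by move=> ij; rewrite mxE (negbTE ij) oppr_le0 normc_ge0.
have GE : map_mx (real_complex R) G = cmp_mx A.
  by apply/matrixP => i j; rewrite !mxE; case: eqP => _; rewrite ?rmorphN normr_normc.
have /complex_realP [a Ea] := al_real.
have /complex_realP [r Er] := ger0_real rho_ge0.
move: rho_lt_al rho_ge0; rewrite Ea Er ltcR ler0c => r_lt_a r_ge0.
pose c := (a - r) ^+ n.
have c_gt0 : 0 < c by rewrite exprn_gt0 // subr_gt0.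
have Gdet t : 0 <= t -> c <= `|\det (t%:M + G)|.
  move=> t_ge0; rewrite -lecR -normr_real_complex -det_map_mx map_mxD map_scalar_mx GE.
  have -> : (t%:C)%:M + cmp_mx A = (t + a)%:C%:M - B.
    by rewrite /B Ea rmorphD raddfD /= opprB addrA addrAC addrK.
  apply: le_trans (normr_det_sub_ge _); last by rewrite Er lecR; lra.
  rewrite Er -rmorphB -rmorphXn lecR.
  by apply: lerXn2r; rewrite ?nnegrE; lra.
have Gu : G \in unitmx.
  have := Gdet 0 (lexx 0); rewrite raddf0 add0r => c_det.
  by rewrite unitmxE unitfE -normr_gt0 (lt_le_trans c_gt0).
have [u u_gt0 Gu1] :=
  monotone_Zmx_pos_solution Gu (Zmx_det_bounded_monotone c_gt0 Goff Gdet) Goff.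
exists (fun i => u i 0) => // i.
have := congr1 (fun X : 'cV_n => X i 0) Gu1; rewrite !mxE => <-.
rewrite [RHS](bigD1 i) //= mxE eqxx -sumrN; congr (_ + _).
by apply: eq_bigr => j ji; rewrite mxE eq_sym (negbTE ji) mulNr.
Qed.
End HMatrixWeight.

Lemma ex_max_ratio (R : realFieldType) (I : finType) (i0 : I) (f w : I -> R) :
  (forall i, 0 < w i) -> exists i, forall j, f j <= f i / w i * w j.
Proof.
move=> w_gt0; case: (@arg_maxP _ _ _ i0 predT (fun i => f i / w i) isT) => i _ max_i.
by exists i => j; rewrite -ler_pdivrMr //; exact: max_i.
Qed.

Section Blocks.
Variables (C : numClosedFieldType) (n m : nat) (blk : 'I_n -> 'I_m).
Local Notation idx := (@bidx n m blk _).

Lemma blk_bidx s (a : 'I_#|blkset blk s|) : blk (idx a) = s.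
Proof. by have := enum_valP a; rewrite inE => /eqP. Qed.

Lemma bidxP j : exists a : 'I_#|blkset blk (blk j)|, idx a = j.
Proof.
have j_blk : j \in blkset blk (blk j) by rewrite inE.
by exists (enum_rank_in j_blk j); rewrite /bidx enum_rankK_in.
Qed.

Lemma sum_blocks (V : nmodType) (F : 'I_n -> V) :
  \sum_j F j = \sum_q \sum_(c < #|blkset blk q|) F (idx c).
Proof.
rewrite (partition_big blk predT) //=; apply: eq_bigr => q _.
by rewrite -big_enum_val; apply: eq_bigl => j; rewrite inE.
Qed.

Lemma sum_block (V : nmodType) (F : 'I_n -> V) s :
  (forall j, blk j != s -> F j = 0) -> \sum_j F j = \sum_(c < #|blkset blk s|) F (idx c).
Proof.
move=> F0; rewrite sum_blocks (bigD1 s) //= [X in _ + X]big1 ?addr0 // => q qs.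
by apply: big1 => c _; rewrite F0 // blk_bidx.
Qed.

Lemma sum_block_neq (V : nmodType) (F : 'I_n -> V) s (a : 'I_#|blkset blk s|) :
  (forall j, blk j != s -> F j = 0) ->
  \sum_(j | j != idx a) F j = \sum_(c | c != a) F (idx c).
Proof.
move=> F0; rewrite big_mkcond (sum_block (s := s)) => [|j js]; last first.
  by case: ifP; rewrite // F0.
by rewrite -big_mkcond; apply: eq_bigl => c; rewrite (inj_eq enum_val_inj).
Qed.

Lemma bvec_mul (A : 'M[C]_n) v s :
  bvec blk (A *m v) s = \sum_q subblock blk A s q *m bvec blk v q.
Proof.
apply/matrixP => a z; rewrite ord1 !mxE summxE sum_blocks; apply: eq_bigr => q _.
by rewrite !mxE; apply: eq_bigr => c _; rewrite !mxE.
Qed.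

Lemma bvecB (v w : 'cV[C]_n) s : bvec blk (v - w) s = bvec blk v s - bvec blk w s.
Proof. by apply/matrixP => a z; rewrite !mxE. Qed.

End Blocks.

Section WeightedDominance.
Variable R : rcfType.

Lemma normc_diag_mulmx_le p (D : 'M[R[i]]_p) (z : 'cV[R[i]]_p) a :
  normc (D a a) * normc (z a 0) <=
  normc ((D *m z) a 0) + \sum_(c | c != a) normc (D a c) * normc (z c 0).
Proof.
rewrite -normcM.
have -> : D a a * z a 0 = (D *m z) a 0 - \sum_(c | c != a) D a c * z c 0.
  by rewrite mxE (bigD1 a) //= addrK.
apply: le_trans (normcB _ _) _; rewrite lerD2l.
by apply: le_trans (normc_sum _ _) _; apply: ler_sum => c _; rewrite normcM.
Qed.

Lemma weighted_dominant_unitmx n (A : 'M[R[i]]_n) (u : 'I_n -> R) :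
  (forall i, 0 < u i) ->
  (forall i, 0 < normc (A i i) * u i - \sum_(j | j != i) normc (A i j) * u j) ->
  A \in unitmx.
Proof.
move=> u_gt0 A_dom.
have A_inj (v : 'cV_n) : A *m v = 0 -> v = 0.
  move=> Av0; apply/matrixP => j k; rewrite ord1 mxE.
  have [i max_i] := ex_max_ratio j (fun j => normc (v j 0)) u_gt0.
  set zeta := normc (v i 0) / u i in max_i.
  have vi : normc (v i 0) = zeta * u i by rewrite divfK ?gt_eqF.
  have : zeta * (normc (A i i) * u i) <= zeta * \sum_(c | c != i) normc (A i c) * u c.
    have := normc_diag_mulmx_le A v i; rewrite Av0 mxE normc0 add0r vi mulrCA.
    move/le_trans; apply; rewrite mulr_sumr; apply: ler_sum => c _.
    by rewrite mulrCA; exact: (ler_wpM2l (normc_ge0 _) (max_i c)).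
  rewrite -subr_le0 -mulrBr pmulr_lle0 // => zeta_le0.
  apply: eq0_normc; apply/eqP; rewrite eq_le normc_ge0 andbT.
  by apply: le_trans (max_i j) _; rewrite pmulr_lle0.
rewrite unitmxE unitfE; apply/negP; rewrite -det_tr => /det0P [v v_neq0 vA].
have := congr1 trmx vA; rewrite trmx_mul trmxK trmx0 => /A_inj /(congr1 trmx).
by rewrite trmxK trmx0 => v0; rewrite v0 eqxx in v_neq0.
Qed.

End WeightedDominance.

Definition splitting_defect (R : rcfType) n (M A : 'M[R[i]]_n) (u : 'I_n -> R) i :=
  \sum_j normc (M i j - A i j) * u j.

Lemma splitting_defect_ge0 (R : rcfType) n (M A : 'M[R[i]]_n) (u : 'I_n -> R) i :
  (forall j, 0 <= u j) -> 0 <= splitting_defect M A u i.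
Proof.
by move=> u_ge0; apply: sumr_ge0 => j _; apply: mulr_ge0 (normc_ge0 _) (u_ge0 j).
Qed.

Definition block_le (R : rcfType) n m (blk : 'I_n -> 'I_m) (u : 'I_n -> R) (E : R)
    (v : 'cV[R[i]]_n) s :=
  forall a : 'I_#|blkset blk s|, normc (v (bidx a) 0) <= E * u (bidx a).

Lemma block_leW (R : rcfType) n m (blk : 'I_n -> 'I_m) (u : 'I_n -> R) E E' v s :
  (forall j, 0 <= u j) -> E <= E' -> block_le blk u E v s -> block_le blk u E' v s.
Proof. by move=> u_ge0 EE' vE a; apply: le_trans (vE a) (ler_wpM2r (u_ge0 _) EE'). Qed.

Lemma normc_cmp_split (R : rcfType) n (M A : 'M[R[i]]_n) :
  cmp_mx M - mabs (M - A) = cmp_mx A -> forall i j,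
  normc (A i j) = if i == j then normc (M i i) - normc (M i i - A i i)
                  else normc (M i j) + normc (M i j - A i j).
Proof.
move/matrixP => MA i j; have := MA i j; rewrite !mxE.
case: eqP => [->|_]; rewrite !normr_normc => MAij; apply: complexI.
  by rewrite rmorphB.
by apply: oppr_inj; rewrite rmorphD -MAij opprD.
Qed.

Section BlockContraction.
Variables (R : rcfType) (n m : nat) (blk : 'I_n -> 'I_m).
Variables (M A : 'M[R[i]]_n) (u : 'I_n -> R) (gam : R).
Local Notation idx := (@bidx n m blk _).
Local Notation defect := (splitting_defect M A u).
Hypothesis M_bd : block_diagonal blk M.
Hypothesis MA : cmp_mx M - mabs (M - A) = cmp_mx A.
Hypothesis u_gt0 : forall i, 0 < u i.
Hypothesis A_weight :
  forall i, normc (A i i) * u i - \sum_(j | j != i) normc (A i j) * u j = 1.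
Hypothesis gam_defect : forall i, defect i <= gam * (1 + defect i).

Lemma M_weight i :
  normc (M i i) * u i - \sum_(j | j != i) normc (M i j) * u j = 1 + defect i.
Proof.
have := A_weight i; rewrite (normc_cmp_split MA) eqxx mulrBl.
rewrite (eq_bigr (fun j => normc (M i j) * u j + normc (M i j - A i j) * u j)).
  by rewrite big_split /= => Aw; rewrite /splitting_defect [in RHS](bigD1 i) //=; lra.
by move=> j ji; rewrite (normc_cmp_split MA) eq_sym (negbTE ji) mulrDl.
Qed.

Lemma normc_block_rhs_le s (w : 'I_m -> 'cV[R[i]]_n) E a :
  (forall q, block_le blk u E (w q) q) ->
  normc ((subblock blk M s s *m bvec blk (w s) s -
          \sum_q subblock blk A s q *m bvec blk (w q) q) a 0) <= E * defect (idx a).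
Proof.
move=> w_le; set i := idx a.
have -> : (subblock blk M s s *m bvec blk (w s) s -
           \sum_q subblock blk A s q *m bvec blk (w q) q) a 0 =
          \sum_q \sum_(c < #|blkset blk q|) (M i (idx c) - A i (idx c)) * w q (idx c) 0.
  under [RHS]eq_bigr do (under eq_bigr do rewrite mulrBl; rewrite sumrB).
  rewrite sumrB !mxE summxE; congr (_ - _).
    rewrite (bigD1 s) //= [X in _ + X]big1 ?addr0 => [|q qs].
      by apply: eq_bigr => c _; rewrite !mxE.
    by apply: big1 => c _; rewrite M_bd ?mul0r // /i !blk_bidx eq_sym.
  by apply: eq_bigr => q _; rewrite mxE; apply: eq_bigr => c _; rewrite !mxE.
rewrite /splitting_defect (sum_blocks blk) mulr_sumr.
apply: le_trans (normc_sum _ _) (ler_sum _ _) => q _; rewrite mulr_sumr.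
apply: le_trans (normc_sum _ _) (ler_sum _ _) => c _.
by rewrite normcM mulrCA; exact: (ler_wpM2l (normc_ge0 _) (w_le q c)).
Qed.

Lemma block_contraction s (z : 'cV[R[i]]_n) (w : 'I_m -> 'cV[R[i]]_n) E :
  0 <= E -> (forall q, block_le blk u E (w q) q) ->
  subblock blk M s s *m bvec blk z s =
    subblock blk M s s *m bvec blk (w s) s -
    \sum_q subblock blk A s q *m bvec blk (w q) q ->
  block_le blk u (gam * E) z s.
Proof.
move=> E_ge0 w_le zE a.
have [a0 max_a0] := ex_max_ratio a (fun c => normc (z (idx c) 0)) (fun c => u_gt0 (idx c)).
set zeta := normc (z (idx a0) 0) / u (idx a0) in max_a0.
suff zeta_le : zeta <= gam * E.
  exact: le_trans (max_a0 a) (ler_wpM2r (ltW (u_gt0 _)) zeta_le).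
set i := idx a0; set D := defect i; set Y := \sum_(j | j != i) normc (M i j) * u j.
have D_ge0 : 0 <= D by rewrite sumr_ge0 // => j _; rewrite mulr_ge0 ?normc_ge0 ?ltW.
have zi : normc (z i 0) = zeta * u i by rewrite divfK ?gt_eqF.
have offdiag : \sum_(c | c != a0) normc (subblock blk M s s a0 c) * normc (bvec blk z s c 0)
               <= zeta * Y.
  rewrite /Y (sum_block_neq (s := s)) => [|j js]; last first.
    by rewrite M_bd ?normc0 ?mul0r // /i blk_bidx eq_sym.
  rewrite mulr_sumr; apply: ler_sum => c _; rewrite !mxE mulrCA.
  exact: (ler_wpM2l (normc_ge0 _) (max_a0 c)).
have row := normc_diag_mulmx_le (subblock blk M s s) (bvec blk z s) a0.
rewrite zE mxE [bvec _ _ _ _ _]mxE zi in row.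
have := le_trans row (lerD (normc_block_rhs_le a0 w_le) offdiag).
rewrite -/i -/D mulrCA => {}row.
have zD : zeta * (1 + D) <= E * D by rewrite -(M_weight i) -/Y mulrBr lerBlDr.
have ED : E * D <= gam * E * (1 + D).
  by rewrite -mulrA mulrCA; exact: (ler_wpM2l E_ge0 (gam_defect i)).
have D1_gt0 : 0 < 1 + D by lra.
by rewrite -(ler_pM2r D1_gt0) (le_trans zD ED).
Qed.

End BlockContraction.

Lemma block_update_error (C : numClosedFieldType) n m (blk : 'I_n -> 'I_m)
    (D A : 'M[C]_n) (b xs z : 'cV[C]_n) (w : 'I_m -> 'cV[C]_n) s :
  subblock blk D s s \in unitmx -> A *m xs = b ->
  bvec blk z s = bvec blk (w s) s + invmx (subblock blk D s s) *m
    (bvec blk b s - \sum_q subblock blk A s q *m bvec blk (w q) q) ->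
  subblock blk D s s *m bvec blk (z - xs) s =
    subblock blk D s s *m bvec blk (w s - xs) s -
    \sum_q subblock blk A s q *m bvec blk (w q - xs) q.
Proof.
move=> Du Axs zE; rewrite !bvecB zE -Axs bvec_mul.
under [in RHS]eq_bigr do rewrite bvecB mulmxBr.
by rewrite sumrB mulmxBr mulmxDr mulmxA mulmxV // mul1mx mulmxBr opprB addrAC.
Qed.

Lemma ex_contraction_factor (R : realFieldType) (I : finType) (d : I -> R) :
  (forall i, 0 <= d i) -> exists2 gam, 0 <= gam < 1 & forall i, d i <= gam * (1 + d i).
Proof.
move=> d_ge0; have d1_gt0 i : 0 < 1 + d i by apply: ltr_wpDr.
exists (\big[Num.max/0]_i (d i / (1 + d i))) => [|i].
  rewrite bigmax_ge_id /=; apply: bigmax_lt => // i _.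
  by rewrite ltr_pdivrMr // mul1r ltrDr.
by rewrite -ler_pdivrMr // le_bigmax.
Qed.

Lemma eventually_forall_fin (T : finType) (P : T -> nat -> Prop) :
  (forall t, exists K, forall k, (K <= k)%N -> P t k) ->
  exists K, forall k, (K <= k)%N -> forall t, P t k.
Proof.
move=> P_ev.
suff [K KP] : exists K, forall t, t \in enum T -> forall k, (K <= k)%N -> P t k.
  by exists K => k Kk t; apply: KP; rewrite ?mem_enum.
elim: (enum T) => [|t ts [K KP]]; first by exists 0%N.
have [Kt KtP] := P_ev t; exists (maxn K Kt) => t'.
rewrite in_cons => /predU1P [->|t'ts] k; rewrite geq_max => /andP [Kk Ktk].
  exact: KtP.
exact: KP.
Qed.

(* [X p k s] says that block [s] of the [k]-th iterate lies in the [p]-th box of a nested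
   family, [Y p k s] the same for the intermediate iterate. *)
Section AsyncLevels.
Variables (m : nat) (Omega : nat -> {set 'I_m}) (delta : 'I_m -> 'I_m -> nat -> nat).
Variables (X Y : nat -> nat -> 'I_m -> Prop).
Hypothesis Omega_inf : forall s K, exists k, (K <= k)%N /\ s \in Omega k.
Hypothesis delta_le : forall s q k, (delta s q k <= k)%N.
Hypothesis delta_lim : forall s q N, exists K, forall k, (K <= k)%N -> (N <= delta s q k)%N.
Hypothesis Y_antitone : forall p k s, Y p.+1 k s -> Y p k s.
Hypothesis X0 : forall s, X 0 0 s.
Hypothesis Y_step : forall p k s, (forall q, X p (delta s q k) q) -> Y p.+1 k s.
Hypothesis X_update :
  forall p k s, s \in Omega k -> (forall q, Y p (delta s q k) q) -> X p k.+1 s.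
Hypothesis X_keep : forall p k s, s \notin Omega k -> X p k s -> X p k.+1 s.

Lemma async_level0 k s : X 0 k s.
Proof.
elim/ltn_ind: k s => -[|k] IHk s; first exact: X0.
have [Os|Os] := boolP (s \in Omega k); last exact/X_keep/IHk.
apply: X_update Os _ => q; apply/Y_antitone/Y_step => q'.
by apply: IHk; rewrite ltnS (leq_trans (delta_le _ _ _) (delta_le _ _ _)).
Qed.

Lemma delays_eventually_ge N :
  exists K, forall k, (K <= k)%N -> forall s q, (N <= delta s q k)%N.
Proof.
have [K KP] := eventually_forall_fin (fun (sq : 'I_m * 'I_m) => delta_lim sq.1 sq.2 N).
by exists K => k Kk s q; apply: (KP k Kk (s, q)).
Qed.

Lemma async_levels p : exists K, forall k, (K <= k)%N -> forall s, X p k s.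
Proof.
elim: p => [|p [K XpK]]; first by exists 0%N => k _ s; exact: async_level0.
have [K1 K1d] := delays_eventually_ge K.
have Yp1 k s : (K1 <= k)%N -> Y p.+1 k s.
  by move=> K1k; apply: Y_step => q; apply/XpK/K1d.
have [K2 K2d] := delays_eventually_ge K1.
have update k s : (K2 <= k)%N -> s \in Omega k -> X p.+1 k.+1 s.
  by move=> K2k Os; apply: X_update Os _ => q; apply/Yp1/K2d.
apply: eventually_forall_fin => s.
have [k0 [K2k0 Os]] := Omega_inf s K2; exists k0.+1.
elim=> [//|k IHk]; rewrite leq_eqVlt ltnS => /predU1P [[<-]|k0k].
  exact: update K2k0 Os.
have [Os'|Os'] := boolP (s \in Omega k).
  exact: update (leq_trans K2k0 (ltnW k0k)) Os'.
exact: X_keep Os' (IHk k0k).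
Qed.

End AsyncLevels.

Lemma bernoulli_ineq (R : realDomainType) (h : R) p :
  0 <= h -> 1 + p%:R * h <= (1 + h) ^+ p.
Proof.
move=> h_ge0; elim: p => [|p IHp]; first by rewrite mul0r addr0 expr0.
rewrite exprS -natr1 mulrDl mul1r.
apply: le_trans (ler_wpM2l (addr_ge0 ler01 h_ge0) IHp).
have : 0 <= p%:R * h * h by rewrite !mulr_ge0.
by rewrite mulrDl mul1r mulrDr mulr1 mulrA; lra.
Qed.

Lemma ex_exprn_mul_lt (R : archiRealFieldType) (gam B eps : R) :
  0 <= gam < 1 -> 0 <= B -> 0 < eps -> exists p, gam ^+ p * B < eps.
Proof.
move=> /andP [gam_ge0 gam_lt1] B_ge0 eps_gt0.
have [->|gam_neq0] := eqVneq gam 0; first by exists 1%N; rewrite expr1 mul0r.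
have gam_gt0 : 0 < gam by rewrite lt_def gam_neq0.
pose h := gam^-1 - 1.
have h_gt0 : 0 < h by rewrite subr_gt0 invf_gt1.
have [p Bp] : exists p : nat, B / (eps * h) < p%:R.
  exists (Num.bound (B / (eps * h))); apply/archi_boundP/divr_ge0 => //.
  by apply: mulr_ge0; apply: ltW.
exists p; have gamE : gam ^+ p = ((1 + h) ^+ p)^-1 by rewrite /h addrC subrK exprVn invrK.
have h1p_gt0 : 0 < (1 + h) ^+ p by apply/exprn_gt0/addr_gt0.
rewrite gamE mulrC ltr_pdivrMr //.
rewrite ltr_pdivrMr ?mulr_gt0 // in Bp.
apply: lt_le_trans (ler_wpM2l (ltW eps_gt0) (bernoulli_ineq p (ltW h_gt0))).
by rewrite mulrDr mulr1 mulrCA; lra.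
Qed.

Section AsyncIteration.
Variables (R : realType) (n m : nat) (blk : 'I_n -> 'I_m).
Variables (A M F : 'M[R[i]]_n) (b xs : 'cV[R[i]]_n).
Variables (Omega : nat -> {set 'I_m}) (delta : 'I_m -> 'I_m -> nat -> nat).
Variables (x y : nat -> 'cV[R[i]]_n) (u : 'I_n -> R) (gam : R).
Hypotheses (M_bd : block_diagonal blk M) (F_bd : block_diagonal blk F).
Hypothesis M_unit : forall s, subblock blk M s s \in unitmx.
Hypothesis F_unit : forall s, subblock blk F s s \in unitmx.
Hypothesis Omega_inf : forall s K, exists k, (K <= k)%N /\ s \in Omega k.
Hypothesis delta_le : forall s q k, (delta s q k <= k)%N.
Hypothesis delta_lim :
  forall s q N, exists K, forall k, (K <= k)%N -> (N <= delta s q k)%N.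
Hypothesis y_def : forall k s,
  bvec blk (y k) s = bvec blk (x (delta s s k)) s + invmx (subblock blk M s s) *m
    (bvec blk b s - \sum_q subblock blk A s q *m bvec blk (x (delta s q k)) q).
Hypothesis x_def : forall k s,
  bvec blk (x k.+1) s =
    if s \in Omega k then
      bvec blk (y (delta s s k)) s + invmx (subblock blk F s s) *m
        (bvec blk b s - \sum_q subblock blk A s q *m bvec blk (y (delta s q k)) q)
    else bvec blk (x k) s.
Hypothesis MA : cmp_mx M - mabs (M - A) = cmp_mx A.
Hypothesis FA : cmp_mx F - mabs (F - A) = cmp_mx A.
Hypothesis u_gt0 : forall i, 0 < u i.
Hypothesis A_weight :
  forall i, normc (A i i) * u i - \sum_(j | j != i) normc (A i j) * u j = 1.
Hypothesis Axs : A *m xs = b.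
Hypotheses (gam_ge0 : 0 <= gam) (gam_lt1 : gam < 1).
Hypothesis gamM :
  forall i, splitting_defect M A u i <= gam * (1 + splitting_defect M A u i).
Hypothesis gamF :
  forall i, splitting_defect F A u i <= gam * (1 + splitting_defect F A u i).

Let u_ge0 j : 0 <= u j := ltW (u_gt0 j).
Let E0 := \big[Num.max/0]_j (normc (x 0%N j 0 - xs j 0) / u j).
Let X_level p k s := block_le blk u (gam ^+ p * E0) (x k - xs) s.
Let Y_level p k s := block_le blk u (gam ^+ p * E0) (y k - xs) s.

Let E0_ge0 : 0 <= E0. Proof. exact: bigmax_ge_id. Qed.

Let level_ge0 p : 0 <= gam ^+ p * E0.
Proof. by apply: mulr_ge0 => //; apply: exprn_ge0. Qed.

Let level_antitone p : gam ^+ p.+1 * E0 <= gam ^+ p * E0.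
Proof. by rewrite exprS -mulrA; exact: ler_piMl (level_ge0 p) (ltW gam_lt1). Qed.

Let Y_antitone p k s : Y_level p.+1 k s -> Y_level p k s.
Proof. exact: block_leW u_ge0 (level_antitone p). Qed.

Let X_level0 s : X_level 0 0 s.
Proof.
move=> a; rewrite expr0 mul1r -ler_pdivrMr // !mxE.
exact: (le_bigmax 0 (fun j => normc (x 0%N j 0 - xs j 0) / u j) (bidx a)).
Qed.

Let Y_step p k s : (forall q, X_level p (delta s q k) q) -> Y_level p.+1 k s.
Proof.
move=> Xd; rewrite /Y_level exprS -mulrA.
apply: (block_contraction M_bd MA u_gt0 A_weight gamM (level_ge0 p) Xd).
exact: block_update_error (M_unit s) Axs (y_def k s).
Qed.

Let X_update p k s :
  s \in Omega k -> (forall q, Y_level p (delta s q k) q) -> X_level p k.+1 s.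
Proof.
move=> Os Yd; apply: block_leW u_ge0 (level_antitone p) _; rewrite exprS -mulrA.
apply: (block_contraction F_bd FA u_gt0 A_weight gamF (level_ge0 p) Yd).
by apply: block_update_error (F_unit s) Axs _; rewrite x_def Os.
Qed.

Let X_keep p k s : s \notin Omega k -> X_level p k s -> X_level p k.+1 s.
Proof.
move=> Os Xk a; have := congr1 (fun v : 'cV_#|blkset blk s| => v a 0) (x_def k s).
by rewrite (negbTE Os) !mxE => ->; have := Xk a; rewrite !mxE.
Qed.

Lemma async_iteration_converges eps : 0 < eps ->
  exists K, forall k, (K <= k)%N -> forall j, normc (x k j 0 - xs j 0) < eps.
Proof.
move=> eps_gt0; pose U := \big[Num.max/0]_j u j.
have gam01 : 0 <= gam < 1 by rewrite gam_ge0 gam_lt1.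
have EU_ge0 : 0 <= E0 * U by apply: mulr_ge0 E0_ge0 _; exact: bigmax_ge_id.
have [p p_small] := ex_exprn_mul_lt gam01 EU_ge0 eps_gt0.
have [K XK] := async_levels Omega_inf delta_le delta_lim
  Y_antitone X_level0 Y_step X_update X_keep p.
exists K => k Kk j; have [a <-] := bidxP blk j.
have := XK k Kk _ a; rewrite !mxE => /le_lt_trans; apply; apply: le_lt_trans p_small.
rewrite -mulrA; apply: ler_wpM2l; first exact: exprn_ge0.
exact: (ler_wpM2l E0_ge0 (le_bigmax 0 u (bidx a))).
Qed.

End AsyncIteration.

Theorem corollary2 (R : realType) (n m : nat) (blk : 'I_n -> 'I_m)
  (A M F : 'M[R[i]]_n) (b : 'cV[R[i]]_n)
  (Omega : nat -> {set 'I_m}) (delta : 'I_m -> 'I_m -> nat -> nat)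
  (x y : nat -> 'cV[R[i]]_n) :
  consecutive_blocks blk ->
  M \in unitmx -> F \in unitmx ->
  block_diagonal blk M -> block_diagonal blk F ->
  (forall s, subblock blk M s s \in unitmx) ->
  (forall s, subblock blk F s s \in unitmx) ->
  (forall s K, exists k, (K <= k)%N /\ s \in Omega k) ->
  (forall s q k, (delta s q k <= k)%N) ->
  (forall s q N, exists K, forall k, (K <= k)%N -> (N <= delta s q k)%N) ->
  (forall k s,
     bvec blk (y k) s =
       bvec blk (x (delta s s k)) s +
       invmx (subblock blk M s s) *m
         (bvec blk b s - \sum_q subblock blk A s q *m bvec blk (x (delta s q k)) q)) ->
  (forall k s,
     bvec blk (x k.+1) s =
       if s \in Omega k then
         bvec blk (y (delta s s k)) s +
         invmx (subblock blk F s s) *m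
           (bvec blk b s - \sum_q subblock blk A s q *m bvec blk (y (delta s q k)) q)
       else bvec blk (x k) s) ->
  is_Hmatrix A ->
  cmp_mx M - mabs (M - A) = cmp_mx A ->
  cmp_mx F - mabs (F - A) = cmp_mx A ->
  exists xs : 'cV[R[i]]_n, A *m xs = b /\
    forall eps : R, 0 < eps ->
      exists K, forall k, (K <= k)%N -> forall j, `|x k j 0 - xs j 0| < (eps%:C)%C.
Proof.
move=> _ _ _ M_bd F_bd M_unit F_unit Omega_inf delta_le delta_lim y_def x_def A_H MA FA.
have [u u_gt0 A_weight] := Hmatrix_weight A_H.
have A_unit : A \in unitmx.
  by apply: (weighted_dominant_unitmx u_gt0) => i; rewrite A_weight ltr01.
pose defect (bi : bool * 'I_n) := splitting_defect (if bi.1 then M else F) A u bi.2.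
have [gam /andP [gam_ge0 gam_lt1] gam_defect] : exists2 gam, 0 <= gam < 1 &
    forall bi, defect bi <= gam * (1 + defect bi).
  by apply: ex_contraction_factor => bi; apply: splitting_defect_ge0 => j; apply: ltW.
exists (invmx A *m b); split; first by rewrite mulKVmx.
move=> eps eps_gt0.
have [K x_conv] := async_iteration_converges M_bd F_bd M_unit F_unit Omega_inf delta_le
  delta_lim y_def x_def MA FA u_gt0 A_weight (mulKVmx A_unit b) gam_ge0 gam_lt1
  (fun i => gam_defect (true, i)) (fun i => gam_defect (false, i)) eps_gt0.
by exists K => k Kk j; rewrite normr_normc ltcR x_conv.
Qed.
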